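(* Let $\beta$ be irrational with continued fraction denominators $(q'_n)_{n\ge1}$. Let $f:\mathbb{T}\to\mathbb{R}$ be real analytic and not a trigonometric polynomial, with Fourier coefficients $a_k$, and let $(l_k)_{k\ge1}$ be a strictly increasing sequence of positive integers with $a_{l_k}\neq0$ and $|a_{l_k}|/T_{l_k}\to\infty$, where $T_n=\sum_{j\ge2}|a_{jn}|\,|jn|$. For $k\ge1$ let $\eta(k)$ be the smallest integer with $q'_{\eta(k)}>2k^2/|a_{l_k}|^2$. For $n,m\ge1$ let $V_{n,m}=\{\alpha\in\mathbb{R}\setminus\mathbb{Q}: q_n(\alpha)=l_m \text{ and } q_{n+1}(\alpha)>2q'_{\eta(m)}n^2\}$, and $\mathcal{U}_j=\bigcup_{n\ge1}V_{n,j}$. Then for every $M\ge1$ the set $\bigcup_{j\ge M}\mathcal{U}_j$ is dense in $\mathbb{R}$.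
   Context: For an irrational $\gamma=[c_0;c_1,c_2,\dots]$, its continued fraction denominators are $q_0=1$, $q_1=c_1$, $q_n=c_nq_{n-1}+q_{n-2}$; $q_n(\gamma)$ denotes the $n$-th one. $\mathbb{T}=\mathbb{R}/\mathbb{Z}$. *)

From Stdlib Require Import Reals ZArith Lra.
From Coquelicot Require Import Coquelicot.
Open Scope R_scope.

Definition irrational (x : R) : Prop :=
  ~ exists (p q : Z), q <> 0%Z /\ x = IZR p / IZR q.

Fixpoint cf_rem (x : R) (n : nat) : R :=
  match n with
  | O => x
  | S m => / frac_part (cf_rem x m)
  end.

Definition cf_digit (x : R) (n : nat) : Z := Int_part (cf_rem x n).

(* (q_{n-1}, q_n) with q_{-1} = 0, q_0 = 1, q_n = c_n q_{n-1} + q_{n-2} *)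
Fixpoint cf_qpair (x : R) (n : nat) : Z * Z :=
  match n with
  | O => (0%Z, 1%Z)
  | S m => let (a, b) := cf_qpair x m in (b, (cf_digit x (S m) * b + a)%Z)
  end.

Definition cf_q (x : R) (n : nat) : Z := snd (cf_qpair x n).

(* f : T -> R seen as a 1-periodic function on R *)
Definition periodic1 (f : R -> R) : Prop := forall x, f (x + 1) = f x.

Definition real_analytic (f : R -> R) : Prop :=
  forall x0 : R, exists (c : nat -> R) (r : R), 0 < r /\
    forall x, Rabs (x - x0) < r -> is_pseries c (x - x0) (f x).

Definition trig_poly (f : R -> R) : Prop :=
  exists (N : nat) (b c : nat -> R), forall x,
    f x = sum_f_R0 (fun k => b k * cos (2 * PI * INR k * x)
                           + c k * sin (2 * PI * INR k * x)) N.

(* |a_k| where a_k = \int_0^1 f(x) e^{-2 pi i k x} dx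
   = \int_0^1 f cos(2 pi k x) - i \int_0^1 f sin(2 pi k x) *)
Definition fourier_abs (f : R -> R) (k : nat) : R :=
  sqrt ((RInt (fun x => f x * cos (2 * PI * INR k * x)) 0 1) ^ 2
      + (RInt (fun x => f x * sin (2 * PI * INR k * x)) 0 1) ^ 2).

Definition Tsum (f : R -> R) (n : nat) : R :=
  Series (fun j => if (j <? 2)%nat then 0
                   else fourier_abs f (j * n) * INR (j * n)).

Definition Vset (beta : R) (l eta : nat -> nat) (n m : nat) (alpha : R) : Prop :=
  irrational alpha /\ cf_q alpha n = Z.of_nat (l m) /\
  IZR (cf_q alpha (S n)) > 2 * IZR (cf_q beta (eta m)) * INR n ^ 2.

Definition Uset (beta : R) (l eta : nat -> nat) (j : nat) (alpha : R) : Prop :=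
  exists n, (1 <= n)%nat /\ Vset beta l eta n j alpha.

Definition dense_R (S : R -> Prop) : Prop :=
  forall x eps, 0 < eps -> exists y, S y /\ Rabs (y - x) < eps.

(* An irrational [alpha] has a convergent with denominator [q] followed by an
   arbitrarily large next denominator as soon as [alpha] is close enough to a
   reduced fraction [r / q]: expand [r / q] by Euclid's algorithm and append a
   huge partial quotient.  Hence it suffices that, for all large [q], the reduced
   fractions with denominator [q] are [eps]-dense, i.e. every interval of length
   [eps q] contains an integer coprime to [q].  Legendre's sieve counts these
   integers as [h phi(q) / q] up to an error [2^omega(q) - 1], and
   [phi(q) / 2^omega(q) >= P / 6] for every prime power [P] dividing [q]; a
   number larger than [N!] has a prime power divisor larger than [N].  Since
   [l m >= m], denominators [q = l m] with [m >= M] are available; the data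
   attached to [f] only enter through the lower bound on the next denominator,
   which the construction makes arbitrary. *)

From Stdlib Require Import Reals ZArith Lra Lia Classical.
From Coquelicot Require Import Coquelicot.
From mathcomp Require Import ssreflect ssrfun ssrbool.
From mathcomp Require all_boot zify.
Open Scope R_scope.

Lemma irrational_neq0 x : irrational x -> x <> 0.
Proof. by move=> Hx x0; apply: Hx; exists 0%Z, 1%Z; split=> //; rewrite x0 /=; field. Qed.

Lemma irrational_addZ x (z : Z) : irrational x -> irrational (x + IZR z).
Proof.
move=> Hx [p [q [q0 e]]]; apply: Hx; exists (p - z * q)%Z, q; split=> //.
have q0R : IZR q <> 0 by apply: not_0_IZR.
rewrite minus_IZR mult_IZR (_ : x = x + IZR z - IZR z); last ring.
by rewrite e; field.
Qed.

Lemma irrational_inv x : irrational x -> irrational (/ x).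
Proof.
move=> Hx [p [q [q0 e]]]; have x0 := irrational_neq0 _ Hx; apply: Hx.
have p0 : p <> 0%Z.
  by move=> p0; apply: (Rinv_neq_0_compat _ x0); rewrite e p0 /=; field; apply: not_0_IZR.
exists q, p; split=> //; rewrite -(Rinv_inv x) e.
by field; split; apply: not_0_IZR.
Qed.

Lemma irrational_frac_part x : irrational x -> irrational (frac_part x).
Proof.
move=> Hx; rewrite (_ : frac_part x = x + IZR (- Int_part x)).
  exact: irrational_addZ.
by rewrite /frac_part opp_IZR; ring.
Qed.

Lemma frac_part_irrational_bounds x : irrational x -> 0 < frac_part x < 1.
Proof.
move=> Hx; have [f0 f1] := base_fp x.
have := irrational_neq0 _ (irrational_frac_part _ Hx); lra.
Qed.

Lemma frac_part_addZ_inv (c : Z) y : 1 < y ->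
  frac_part (IZR c + / y) = / y /\ Int_part (IZR c + / y) = c.
Proof.
move=> y1; have iy : 0 < / y < 1.
  split; first by apply: Rinv_0_lt_compat; lra.
  by rewrite -Rinv_1; apply: Rinv_lt_contravar; lra.
have Ic : Int_part (IZR c + / y) = c by symmetry; apply: Int_part_spec; lra.
by split=> //; rewrite /frac_part Ic; ring.
Qed.

Lemma cf_rem_succ x n : cf_rem x (S n) = cf_rem (/ frac_part x) n.
Proof. by elim: n => //= n ->. Qed.

Lemma cf_digit_succ x n : cf_digit x (S n) = cf_digit (/ frac_part x) n.
Proof. by rewrite /cf_digit cf_rem_succ. Qed.

Lemma cf_rem_irrational x n : irrational x -> irrational (cf_rem x n).
Proof. by move=> Hx; elim: n => //= n IH; apply/irrational_inv/irrational_frac_part. Qed.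

Lemma cf_digit_ge1 x n : irrational x -> (1 <= cf_digit x (S n))%Z.
Proof.
move=> Hx; have [f0 f1] := frac_part_irrational_bounds _ (cf_rem_irrational _ n Hx).
have r1 : 1 < cf_rem x (S n) by rewrite /= -Rinv_1; apply: Rinv_lt_contravar; nra.
have [b1 b2] := base_Int_part (cf_rem x (S n)).
suff : (0 < cf_digit x (S n))%Z by lia.
by apply: lt_IZR; rewrite /cf_digit; lra.
Qed.

(* Numerators of the convergents, with p_{-1} = 1 and p_0 = c_0. *)
Fixpoint cf_ppair (x : R) (n : nat) : Z * Z :=
  match n with
  | O => (1%Z, cf_digit x 0)
  | S m => let (a, b) := cf_ppair x m in (b, (cf_digit x (S m) * b + a)%Z)
  end.

Definition cf_p (x : R) (n : nat) : Z := snd (cf_ppair x n).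

Lemma cf_qpairS x n :
  cf_qpair x (S n) = let (a, b) := cf_qpair x n in (b, (cf_digit x (S n) * b + a)%Z).
Proof. by []. Qed.

Lemma cf_ppairS x n :
  cf_ppair x (S n) = let (a, b) := cf_ppair x n in (b, (cf_digit x (S n) * b + a)%Z).
Proof. by []. Qed.

Lemma cf_pairs_succ x n (y := / frac_part x) (c := cf_digit x 0) :
  cf_qpair x (S n) = cf_ppair y n /\
  cf_ppair x (S n) = ((c * fst (cf_ppair y n) + fst (cf_qpair y n))%Z,
                      (c * snd (cf_ppair y n) + snd (cf_qpair y n))%Z).
Proof.
elim: n => [|n [IHq IHp]].
  by rewrite /= cf_digit_succ; split; congr pair; rewrite /y /c; ring.
rewrite (cf_qpairS x (S n)) (cf_ppairS x (S n)) IHq IHp cf_ppairS cf_qpairS.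
case: (cf_ppair y n) => a b; case: (cf_qpair y n) => a' b' /=.
by rewrite cf_digit_succ; split=> //; congr pair; rewrite /y /c; ring.
Qed.

Lemma cf_qpair_bounds x n : irrational x ->
  (0 <= fst (cf_qpair x n))%Z /\ (1 <= snd (cf_qpair x n))%Z.
Proof.
move=> Hx; elim: n => [|n IH] /=; first lia.
move: IH; case: (cf_qpair x n) => a b /= IH.
have := cf_digit_ge1 _ n Hx; nia.
Qed.

Lemma cf_q_succ_gt x n : irrational x -> cf_rem x (S n) - 1 < IZR (cf_q x (S n)).
Proof.
move=> Hx; have := cf_qpair_bounds _ n Hx; have := cf_digit_ge1 _ n Hx.
have [b1 b2] := base_Int_part (cf_rem x (S n)).
rewrite /cf_q cf_qpairS; case: (cf_qpair x n) => a b /= d1 [a0 b0]; rewrite -/(cf_rem x (S n)).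
suff /IZR_le : (cf_digit x (S n) <= cf_digit x (S n) * b + a)%Z by rewrite /cf_digit in b2 *; lra.
nia.
Qed.

Lemma cf_prepend_digit (c : Z) y : 1 < y -> irrational y ->
  let a := IZR c + / y in
  [/\ irrational a, cf_p a 0 = c, forall n, cf_rem a (S n) = cf_rem y n,
      forall n, cf_q a (S n) = cf_p y n
    & forall n, cf_p a (S n) = (c * cf_p y n + cf_q y n)%Z].
Proof.
move=> y1 Hy a; have [fa Ia] := frac_part_addZ_inv c _ y1.
have ya : / frac_part a = y by rewrite fa Rinv_inv.
split=> [||n|n|n].
- by rewrite /a Rplus_comm; apply/irrational_addZ/irrational_inv.
- by rewrite /cf_p /= /cf_digit /a Ia.
- by rewrite cf_rem_succ ya.
- by have [Eq _] := cf_pairs_succ a n; rewrite /cf_q Eq ya.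
- by have [_ Ep] := cf_pairs_succ a n; rewrite /cf_p Ep ya /cf_digit /= /a Ia.
Qed.

(* The tail is an integer translate of [seed], hence irrational. *)
Lemma cf_near_integer seed (c : Z) (eps b : R) : irrational seed -> 0 < eps ->
  exists alpha, [/\ irrational alpha, Rabs (alpha - IZR c) < eps,
                    cf_p alpha 0 = c & b < cf_rem alpha 1].
Proof.
move=> Hs e0; pose K := Rmax 1 (Rmax b (/ eps)).
have K1 : 1 <= K by apply: Rmax_l.
have Kb : b <= K by apply: Rle_trans (Rmax_l _ _) (Rmax_r _ _).
have Ke : / eps <= K by apply: Rle_trans (Rmax_r _ _) (Rmax_r _ _).
have [up1 _] := archimed (K - seed); set y := seed + IZR (up (K - seed)).
have yK : K < y by rewrite /y; lra.
have y1 : 1 < y by lra.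
have [Ha p0 Hrem _ _] := cf_prepend_digit c _ y1 (irrational_addZ _ _ Hs).
exists (IZR c + / y); split=> //; last by rewrite Hrem /=; lra.
rewrite (_ : IZR c + / y - IZR c = / y); last ring.
rewrite Rabs_pos_eq; last by apply/Rlt_le/Rinv_0_lt_compat; lra.
rewrite -(Rinv_inv eps); apply: Rinv_lt_contravar; last lra.
by apply: Rmult_lt_0_compat; [apply: Rinv_0_lt_compat | lra].
Qed.

Section ReducedFractions.
Import mathcomp.boot.all_boot mathcomp.zify.zify.
Local Open Scope nat_scope.
Delimit Scope R_scope with R. (* [all_boot] rebinds [%R] *)
Local Set Implicit Arguments.
Local Unset Strict Implicit.

Lemma INR_addn a b : INR (a + b) = (INR a + INR b)%R.
Proof. exact: plus_INR. Qed.

Lemma INR_muln a b : INR (a * b) = (INR a * INR b)%R.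
Proof. exact: mult_INR. Qed.

Lemma INR_leq a b : a <= b -> (INR a <= INR b)%R.
Proof. by move/leP; apply: le_INR. Qed.

Lemma INR_ltn a b : a < b -> (INR a < INR b)%R.
Proof. by move/ltP; apply: lt_INR. Qed.

Lemma INR_expn m n : INR (m ^ n) = (INR m ^ n)%R.
Proof. by elim: n => [|n IH]; rewrite ?expn0 // expnS INR_muln IH. Qed.

Lemma leq_totient n : totient n <= n.
Proof.
rewrite totient_count_coprime -[leqRHS]muln1 -[n in n * 1]subn0 -sum_nat_const_nat.
by apply: leq_sum => i _; apply: leq_b1.
Qed.

Lemma pfactor_split p q : prime p -> p %| q -> 0 < q ->
  exists m k, [/\ q = m * p ^ k, coprime p m, 0 < m, 0 < k & m < q].
Proof.
move=> pp pq q0; have [m cpm qE] := pfactor_coprime pp q0.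
have p1 := prime_gt1 pp.
have k0 : 0 < logn p q by rewrite logn_gt0 mem_primes pp q0.
have m0 : 0 < m by move: q0; rewrite qE muln_gt0 => /andP[].
have pk : 1 < p ^ logn p q by rewrite -(expn0 p) ltn_exp2l.
by exists m, (logn p q); split=> //; rewrite [X in _ < X]qE; nia.
Qed.

Lemma prime_power_dvd_pfactor p m k s j : prime p -> coprime p m -> prime s ->
  s ^ j %| m * p ^ k -> (s = p /\ s ^ j <= p ^ k) \/ s ^ j %| m.
Proof.
move=> pp cpm ps sjq; case: (eqVneq s p) => [sp | snp].
  left; split=> //; subst s; apply: dvdn_leq; first by rewrite expn_gt0 prime_gt0.
  by rewrite -(Gauss_dvdl _ (coprimeXl j cpm)) mulnC.
right; have csp : coprime s p by rewrite prime_coprime // dvdn_prime2.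
by rewrite -(Gauss_dvdl _ (coprimeXr k (coprimeXl j csp))).
Qed.

Lemma size_primes_pfactor p m k : prime p -> coprime p m -> 0 < m -> 0 < k ->
  size (primes (m * p ^ k)) = (size (primes m)).+1.
Proof.
move=> pp cpm m0 k0.
have pm : p \notin primes m by rewrite mem_primes pp m0 -prime_coprime.
suff /perm_size -> : perm_eq (primes (m * p ^ k)) (p :: primes m) by [].
apply: uniq_perm; rewrite /= ?primes_uniq ?pm // => s.
by rewrite primesM // ?expn_gt0 ?prime_gt0 // primesX // (primes_prime pp) mem_seq1 in_cons orbC.
Qed.

Lemma totient_pfactor_coprime p m k : prime p -> coprime p m -> 0 < k ->
  totient (m * p ^ k) = totient m * (p.-1 * p ^ k.-1).
Proof.
by move=> pp cpm k0; rewrite totient_coprime ?totient_pfactor // coprime_sym coprimeXl.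
Qed.

Definition ceil_divn a p := (a + p.-1) %/ p.

Lemma ceil_divn_bounds a p : 0 < p -> a <= p * ceil_divn a p < a + p.
Proof.
move=> p0; have := divn_eq (a + p.-1) p; have := ltn_pmod (a + p.-1) p0.
rewrite /ceil_divn; set u := _ %/ p; set v := _ %% p; nia.
Qed.

Lemma ceil_divnS a p : 0 < p -> ceil_divn a.+1 p = ceil_divn a p + (p %| a).
Proof.
move=> p0; have := ceil_divn_bounds a p0; have := ceil_divn_bounds a.+1 p0.
move: (ceil_divn a p) (ceil_divn a.+1 p) => c c'.
case: (boolP (p %| a)) => [/dvdnP [u ->] | pa] /=.
  by move=> /andP [h1 h2] /andP [h3 h4]; have -> : c = u; nia.
have /eqP : p * c != a by apply: contra pa => /eqP <-; apply: dvdn_mulr.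
move=> h0 /andP [h1 h2] /andP [h3 h4]; nia.
Qed.

Lemma count_dvdn_iota0 p (P : pred nat) x : 0 < p ->
  count (fun n => (p %| n) && P (n %/ p)) (iota 0 x) = count P (iota 0 (ceil_divn x p)).
Proof.
move=> p0; elim: x => [|x IH]; first by rewrite /ceil_divn divn_small // prednK.
rewrite ceil_divnS // -addn1 iotaD count_cat IH add0n /=.
case: (boolP (p %| x)) => [/dvdnP [u ->] | pa] /=; last by rewrite !addn0.
have -> : ceil_divn (u * p) p = u by have := ceil_divn_bounds (u * p) p0; nia.
by rewrite mulnK // iotaD count_cat /= !addn0.
Qed.

Definition count_coprime q a h := count (coprime^~ q) (iota a h).

Lemma count_coprime_pfactor p m k a h : prime p -> coprime p m -> 0 < k ->
  count_coprime m a h = count_coprime (m * p ^ k) a h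
                        + count_coprime m (ceil_divn a p) (ceil_divn (a + h) p - ceil_divn a p).
Proof.
move=> pp cpm k0; have p0 := prime_gt0 pp.
pose D n := (p %| n) && coprime (n %/ p) m.
have countCm s : count (coprime^~ m) s = count (coprime^~ (m * p ^ k)) s + count D s.
  elim: s => //= n s ->; rewrite /D coprimeMr coprime_pexpr //.
  case: (boolP (p %| n)) => [/dvdnP [u ->] | pn] /=.
    rewrite mulnK // [coprime _ m]coprimeMl cpm andbT [coprime _ p]coprime_sym.
    by rewrite (prime_coprime _ pp) dvdn_mull //= andbF; lia.
  by rewrite [coprime n p]coprime_sym (prime_coprime _ pp) pn andbT; lia.
have iota0D x y : x <= y -> forall P, count P (iota 0 y) = count P (iota 0 x) + count P (iota x (y - x)).
  by move=> xy P; rewrite -count_cat -{2}[x]add0n -iotaD subnKC.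
have le_cdiv : ceil_divn a p <= ceil_divn (a + h) p by apply: leq_div2r; rewrite leq_add2r leq_addr.
have := countCm (iota a h); have := iota0D _ _ (leq_addr h a) D; rewrite addKn.
have countD x : count D (iota 0 x) = count (coprime^~ m) (iota 0 (ceil_divn x p)).
  exact: count_dvdn_iota0.
rewrite !countD (iota0D _ _ le_cdiv) /count_coprime; lia.
Qed.

Lemma count_coprime1 a h : count_coprime 1 a h = h.
Proof.
by rewrite /count_coprime (eq_count (a2 := predT)) ?count_predT ?size_iota // => n; rewrite /= coprimen1.
Qed.

Lemma ceil_divn_window p a h : 0 < p ->
  h < p * (ceil_divn (a + h) p - ceil_divn a p) + p
  /\ p * (ceil_divn (a + h) p - ceil_divn a p) < h + p.
Proof.
move=> p0; have := ceil_divn_bounds a p0; have := ceil_divn_bounds (a + h) p0.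
have : ceil_divn a p <= ceil_divn (a + h) p by apply: leq_div2r; rewrite leq_add2r leq_addr.
move: (ceil_divn a p) (ceil_divn (a + h) p) => b e be /andP [e1 e2] /andP [b1 b2]; nia.
Qed.

Lemma totient_ratio_pfactor p m k : prime p -> coprime p m -> 0 < m -> 0 < k ->
  (INR (totient (m * p ^ k)) / INR (m * p ^ k)
   = INR (totient m) / INR m * (1 - / INR p))%R.
Proof.
move=> pp cpm m0 k0; have p0 := prime_gt0 pp.
have mR : (0 < INR m)%R by exact: (INR_ltn m0).
have tR : (0 < INR (p ^ k.-1))%R by apply: (@INR_ltn 0); rewrite expn_gt0 p0.
have pR : (INR p = INR p.-1 + 1)%R by rewrite -S_INR prednK.
have := pos_INR p.-1.
rewrite totient_pfactor_coprime // -{2}(prednK k0) expnS !INR_muln pR => p1; field; lra.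
Qed.

Lemma count_coprime_approx q a h : 0 < q ->
  (Rabs (INR (count_coprime q a h) - INR h * (INR (totient q) / INR q))
    <= 2 ^ size (primes q) - 1)%R.
Proof.
elim/ltn_ind: q a h => q IH a h q0.
have [-> | q_gt1] : q = 1 \/ 1 < q by lia.
  rewrite count_coprime1 /= (_ : INR h * (1 / 1) = INR h)%R; last by field.
  by rewrite Rminus_diag Rabs_R0; lra.
have pp := pdiv_prime q_gt1; set p := pdiv q in pp *; have p0 := prime_gt0 pp.
have [m [k [qE cpm m0 k0 mq]]] := pfactor_split pp (pdiv_dvd q) q0; rewrite qE.
have [] := ceil_divn_window a h p0; set b := ceil_divn a p; set h' := ceil_divn (a + h) p - b.
move/INR_ltn; rewrite !INR_addn INR_muln => hb1; move/INR_ltn; rewrite INR_addn INR_muln => hb2.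
pose r := (INR (totient m) / INR m)%R.
have mR : (0 < INR m)%R by exact: (INR_ltn m0).
have [r0 r1] : (0 <= r <= 1)%R.
  rewrite /r; split; first by apply: Rdiv_le_0_compat; [apply: pos_INR | lra].
  by apply/(Rdiv_le_1 _ _ mR); apply: INR_leq; apply: leq_totient.
have : (Rabs (r * (INR h' - INR h / INR p)) <= 1)%R.
  rewrite Rabs_mult Rabs_pos_eq //; apply: Rle_trans (_ : 1 * 1 <= 1)%R; last lra.
  apply: Rmult_le_compat; try lra; first exact: Rabs_pos.
  rewrite Rabs_le_between; split; apply: (Rmult_le_reg_l (INR p)); try lra;
    rewrite Rmult_minus_distr_l; field_simplify; lra.
have := IH m mq a h m0; have := IH m mq b h' m0; rewrite -/r.
rewrite totient_ratio_pfactor // -/r size_primes_pfactor // -tech_pow_Rmult.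
rewrite (count_coprime_pfactor a h pp cpm k0) -/b -/h' INR_addn !Rabs_le_between; lra.
Qed.

Lemma odd_totient_bounds q : 0 < q -> odd q ->
  2 ^ size (primes q) <= totient q /\
  forall s j, prime s -> s ^ j %| q -> s ^ j * 2 ^ size (primes q) <= 3 * totient q.
Proof.
elim/ltn_ind: q => q IH q0 oq.
have [-> | q_gt1] : q = 1 \/ 1 < q by lia.
  by split=> // s j _; rewrite dvdn1 => /eqP ->.
have pp := pdiv_prime q_gt1; set p := pdiv q in pp *.
have [m [k [qE cpm m0 k0 mq]]] := pfactor_split pp (pdiv_dvd q) q0.
have [om opk] : odd m /\ odd (p ^ k) by apply/andP; rewrite -oddM -qE.
have op : odd p by move: opk; rewrite oddX eqn0Ngt k0.
have p3 : 3 <= p by have := prime_gt1 pp; move: op; case: (p) => [|[|[|]]].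
have [IH1 IH2] := IH m mq m0 om.
rewrite qE size_primes_pfactor // totient_pfactor_coprime // expnS.
have pk : p ^ k = p.-1.+1 * p ^ k.-1 by rewrite prednK ?prime_gt0 // -expnS prednK.
have t0 : 0 < p ^ k.-1 by rewrite expn_gt0 prime_gt0.
have d2 : 2 <= p.-1 by lia.
move: (p ^ k.-1) (p.-1) pk t0 d2 => t d pk t0 d2.
have dt : 2 <= d * t by rewrite -[2]muln1 leq_mul // ltnW.
split; first by rewrite mulnC leq_mul.
move=> s j ps /(prime_power_dvd_pfactor pp cpm ps) [[_ sjp] | /(IH2 s j ps) sjm].
  rewrite pk in sjp; have := leq_mul sjp (leq_mul (leqnn 2) IH1).
  have := leq_mul (leqnn (t * totient m)) (_ : 2 * d.+1 <= 3 * d); lia.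
have := leq_mul sjm dt; lia.
Qed.

Lemma prime_power_totient_bound q s j : 0 < q -> prime s -> s ^ j %| q ->
  s ^ j * 2 ^ size (primes q) <= 6 * totient q.
Proof.
move=> q0 ps sjq; case: (boolP (odd q)) => oq.
  by have [_ /(_ s j ps sjq)] := odd_totient_bounds q0 oq; lia.
have p2 : prime 2 by [].
have q2 : 2 %| q by rewrite dvdn2.
have [m [k [qE cpm m0 k0 _]]] := pfactor_split p2 q2 q0.
have om : odd m by rewrite -coprime2n.
have [IH1 IH2] := odd_totient_bounds m0 om.
rewrite qE size_primes_pfactor // totient_pfactor_coprime // expnS mul1n.
have t0 : 0 < 2 ^ k.-1 by rewrite expn_gt0.
have pk : 2 ^ k = 2 * 2 ^ k.-1 by rewrite -expnS prednK.
move: sjq; rewrite qE => /(prime_power_dvd_pfactor p2 cpm ps) [[_ sj2] | /(IH2 s j ps) sjm].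
  rewrite pk in sj2; have := leq_mul sj2 (leq_mul (leqnn 2) IH1); lia.
have := leq_mul sjm t0; lia.
Qed.

Lemma dvdn_fact_small_prime_powers N q : 0 < q ->
  (forall s j, prime s -> s ^ j %| q -> s ^ j <= N) -> q %| N`!.
Proof.
elim/ltn_ind: q => q IH q0 small.
have [-> | q_gt1] : q = 1 \/ 1 < q by lia.
  exact: dvd1n.
have pp := pdiv_prime q_gt1; set p := pdiv q in pp *.
have [m [k [qE cpm m0 k0 mq]]] := pfactor_split pp (pdiv_dvd q) q0.
rewrite qE Gauss_dvd; last by rewrite coprime_sym coprimeXl.
apply/andP; split.
  by apply: IH => // s j ps sjm; apply: small => //; rewrite qE dvdn_mulr.
apply: dvdn_fact; rewrite expn_gt0 prime_gt0 //=.
by apply: small => //; rewrite qE dvdn_mull.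
Qed.

Lemma coprime_in_long_interval (eps : R) : (0 < eps)%R ->
  exists Q0, forall q, Q0 <= q -> forall a h, (eps * INR q <= INR h)%R ->
  exists2 n, a <= n < a + h & coprime n q.
Proof.
move=> e0; have [N hN] := INR_unbounded (6 / eps).
exists N`!.+1 => q hq a h hh; have q0 : 0 < q by apply: leq_trans hq.
have [s [j [ps sjq big]]] : exists s j, [/\ prime s, s ^ j %| q & N < s ^ j].
  apply: NNPP => none; have /(dvdn_leq (fact_gt0 N)) : q %| N`!; last lia.
  apply: dvdn_fact_small_prime_powers => // s j ps sjq; rewrite leqNgt.
  by apply/negP => sjN; apply: none; exists s, j.
have := count_coprime_approx a h q0; have := INR_ltn big.
set C := INR (count_coprime q a h); set F := INR (totient q); set A := (2 ^ _)%R.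
have bound : (INR (s ^ j) * A <= 6 * F)%R.
  have := INR_leq (prime_power_totient_bound q0 ps sjq).
  rewrite !INR_muln [INR (2 ^ _)]INR_expn (_ : INR 6 = 6%R); last by rewrite INR_IZR_INZ.
  by change (INR 2) with 2%R.
have qR : (0 < INR q)%R by exact: (INR_ltn q0).
have F0 : (0 <= F)%R by apply: pos_INR.
move=> NS approx.
suff /INR_lt /ltP : (INR 0 < C)%R.
  by rewrite -has_count => /hasP [n]; rewrite mem_iota; exists n.
have hF : (eps * F <= INR h * (F / INR q))%R.
  rewrite (_ : eps * F = eps * INR q * (F / INR q))%R; last by field; lra.
  by apply: Rmult_le_compat_r => //; apply: Rdiv_le_0_compat.
have : (A <= eps * F)%R.
  have h6 : (6 <= eps * INR (s ^ j))%R.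
    have := Rmult_lt_compat_l eps _ _ e0 (Rlt_trans _ _ _ hN NS).
    by rewrite (_ : eps * (6 / eps) = 6)%R; [lra | field; lra].
  apply: (Rmult_le_reg_l (INR (s ^ j))); first by have := pos_INR N; lra.
  apply: Rle_trans bound _; rewrite -Rmult_assoc (Rmult_comm _ eps).
  exact: Rmult_le_compat_r.
change (INR 0) with 0%R; move: approx; rewrite Rabs_le_between; lra.
Qed.

Lemma reduced_fraction_near (eps : R) : (0 < eps)%R ->
  exists Q0, forall q, Q0 <= q -> forall x : R, exists (c : Z) r,
  [/\ r < q, coprime r q & (Rabs (IZR c + INR r / INR q - x) < eps)%R].
Proof.
move=> e0; have e2 : (0 < eps / 2)%R by lra.
have [Q1 HQ1] := coprime_in_long_interval e2.
have [Q2 hQ2] := INR_unbounded (2 / eps).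
exists (maxn (maxn Q1 Q2) 1) => q hq x.
have q0 : 0 < q by lia.
have qR : (0 < INR q)%R by exact: (INR_ltn q0).
have q_big : (1 < eps / 2 * INR q)%R.
  have /INR_leq Qq : Q2 <= q by lia.
  have := Rmult_lt_compat_l (eps / 2) _ _ e2 (Rlt_le_trans _ _ _ hQ2 Qq).
  by rewrite (_ : eps / 2 * (2 / eps) = 1)%R; [lra | field; lra].
pose t := frac_part x; have [t0 t1] := base_fp x; rewrite -/t in t0 t1.
have [fl1 fl2] := base_Int_part (INR q * t).
have [up1 up2] := archimed (eps / 2 * INR q).
pose a := Z.to_nat (Int_part (INR q * t)); pose h := Z.to_nat (up (eps / 2 * INR q)).
have aR : INR a = IZR (Int_part (INR q * t)).
  have qt0 : (0 <= INR q * t)%R by apply: Rmult_le_pos; lra.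
  have fl0 : (-1 < Int_part (INR q * t))%Z by apply: lt_IZR; lra.
  by rewrite /a INR_IZR_INZ Z2Nat.id //; lia.
have hR : INR h = IZR (up (eps / 2 * INR q)).
  by rewrite /h INR_IZR_INZ Z2Nat.id //; apply: le_IZR; lra.
have Q1q : Q1 <= q by lia.
have long : (eps / 2 * INR q <= INR h)%R by lra.
have [n /andP [an nah] cn] := HQ1 q Q1q a h long.
move/INR_leq: an; move/INR_leq: nah; rewrite S_INR INR_addn => nah an.
exists (Int_part x + Z.of_nat (n %/ q))%Z, (n %% q); split.
- exact: ltn_pmod.
- by rewrite coprime_modl.
have -> : (IZR (Int_part x + Z.of_nat (n %/ q)) + INR (n %% q) / INR q - x
           = (INR n - INR q * t) / INR q)%R.
  rewrite plus_IZR -INR_IZR_INZ {3}(divn_eq n q) INR_addn INR_muln /t /frac_part; field; lra.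
rewrite Rabs_div ?(Rabs_pos_eq (INR q)); try lra.
apply/(Rlt_div_l _ _ _ qR); rewrite Rabs_lt_between; split; nra.
Qed.

Lemma exists_cf_convergent seed : irrational seed ->
  forall Q r (c : Z) (eps : R) (B : nat -> R), 0 < Q -> r < Q -> coprime r Q -> (0 < eps)%R ->
  exists alpha n, [/\ irrational alpha, (Rabs (alpha - (IZR c + INR r / INR Q)) < eps)%R,
    cf_p alpha n = (c * Z.of_nat Q + Z.of_nat r)%Z, cf_q alpha n = Z.of_nat Q
    & (B n < cf_rem alpha n.+1)%R].
Proof.
move=> Hs; elim/ltn_ind => Q IH r c eps B Q0 rQ crQ e0.
case: (posnP r) => [r0 | r0].
  move: crQ; rewrite r0 /coprime gcd0n => /eqP Q1; subst Q r.
  have [alpha [Ha cl p0 rem]] := cf_near_integer _ c eps (B 0%N) Hs e0.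
  exists alpha, 0; split=> //; last by rewrite p0; lia.
  by rewrite /= Rdiv_1_r Rplus_0_r.
have rR : (0 < INR r)%R by exact: (INR_ltn r0).
have QR : (INR r < INR Q)%R by exact: INR_ltn.
pose d := (INR Q / INR r)%R.
have d1 : (1 < d)%R by apply/(Rlt_div_r _ _ _ rR); lra.
pose eps' := Rmin eps ((d - 1) / 2).
have [e1 e2] : (eps' <= eps /\ eps' <= (d - 1) / 2)%R by split; [apply: Rmin_l | apply: Rmin_r].
have e'0 : (0 < eps')%R by apply: Rmin_pos; lra.
have cQr : coprime (Q %% r) r by rewrite coprime_modl coprime_sym.
have [y [n [Hy cly py qy remy]]] :=
  IH r rQ (Q %% r) (Z.of_nat (Q %/ r)) eps' (fun n => B n.+1) r0 (ltn_pmod _ r0) cQr e'0.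
have QE : (IZR (Z.of_nat (Q %/ r)) + INR (Q %% r) / INR r = d)%R.
  by rewrite /d -INR_IZR_INZ {3}(divn_eq Q r) INR_addn INR_muln; field; lra.
rewrite QE in cly; move: cly; rewrite Rabs_lt_between => cly.
have y1 : (1 < y)%R by lra.
have [Ha _ Hrem Hq Hp] := cf_prepend_digit c _ y1 Hy.
have QZ : (Z.of_nat (Q %/ r) * Z.of_nat r + Z.of_nat (Q %% r))%Z = Z.of_nat Q.
  by rewrite {3}(divn_eq Q r); lia.
exists (IZR c + / y)%R, n.+1; split=> //.
- rewrite (_ : IZR c + / y - (IZR c + INR r / INR Q) = (d - y) / (y * d))%R; last by rewrite /d; field; lra.
  have yd : (1 < y * d)%R by nra.
  rewrite Rabs_div ?(Rabs_pos_eq (y * d)); try lra.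
  apply/(Rlt_div_l _ _ _ (_ : 0 < y * d)%R); first lra.
  have : (eps < eps * (y * d))%R by rewrite -{1}(Rmult_1_r eps); apply: Rmult_lt_compat_l.
  rewrite Rabs_lt_between; lra.
- by rewrite Hp py qy QZ.
- by rewrite Hq py QZ.
- by rewrite Hrem.
Qed.

Lemma dense_cf_denominators seed (eps : R) : irrational seed -> (0 < eps)%R ->
  exists Q0, forall q, Q0 <= q -> forall x (B : nat -> R), exists alpha n,
  [/\ irrational alpha, (Rabs (alpha - x) < eps)%R, cf_q alpha n = Z.of_nat q,
      (B n < IZR (cf_q alpha n.+1))%R & 0 < n].
Proof.
move=> Hs e0; have e2 : (0 < eps / 2)%R by lra.
have [Q0 HQ0] := reduced_fraction_near e2.
exists (maxn Q0 2) => q hq x B.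
have [c [r [rq crq cl]]] := HQ0 q (leq_trans (leq_maxl _ _) hq) x.
have q0 : 0 < q by lia.
have [alpha [n [Ha cla _ qa rema]]] := exists_cf_convergent Hs c (fun n => B n + 1)%R q0 rq crq e2.
exists alpha, n; split=> //.
- by move: cla cl; rewrite !Rabs_lt_between; lra.
- by have := cf_q_succ_gt _ n Ha; lra.
- by case: n qa {rema cla} => // /(f_equal Z.to_nat); rewrite Nat2Z.id /=; lia.
Qed.

End ReducedFractions.

Lemma index_le_strictly_increasing (l : nat -> nat) :
  (forall k, (1 <= k)%nat -> (0 < l k)%nat) ->
  (forall k, (1 <= k)%nat -> (l k < l (S k))%nat) ->
  forall k, (1 <= k)%nat -> (k <= l k)%nat.
Proof.
move=> lpos linc; elim=> [|k IH] k1; first lia.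
case: k IH k1 => [_ _ | k IH _]; first exact: lpos.
have := linc (S k); have := IH; lia.
Qed.

Theorem lemma6p2
  (beta : R) (f : R -> R) (l eta : nat -> nat)
  (Hbeta : irrational beta)
  (Hper : periodic1 f) (Han : real_analytic f) (Hntp : ~ trig_poly f)
  (Hlpos : forall k, (1 <= k)%nat -> (0 < l k)%nat)
  (Hlinc : forall k, (1 <= k)%nat -> (l k < l (S k))%nat)
  (Hanz : forall k, (1 <= k)%nat -> fourier_abs f (l k) <> 0)
  (Hlim : forall C : R, exists K, forall k, (K <= k)%nat ->
            C * Tsum f (l k) < fourier_abs f (l k))
  (Heta : forall k, (1 <= k)%nat ->
     (1 <= eta k)%nat /\
     IZR (cf_q beta (eta k)) > 2 * INR k ^ 2 / (fourier_abs f (l k)) ^ 2 /\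
     (forall n, (1 <= n)%nat -> (n < eta k)%nat ->
        ~ (IZR (cf_q beta n) > 2 * INR k ^ 2 / (fourier_abs f (l k)) ^ 2))) :
  forall M : nat, (1 <= M)%nat ->
    dense_R (fun alpha => exists j, (M <= j)%nat /\ Uset beta l eta j alpha).
Proof.
move=> M M1 x eps e0.
have [Q0 HQ0] := dense_cf_denominators Hbeta e0.
pose m := Nat.max M (Nat.max Q0 1).
have lm : (Q0 <= l m)%nat by have := index_le_strictly_increasing l Hlpos Hlinc m; lia.
have [alpha [n [Ha cl qa Ba n0]]] :=
  HQ0 (l m) (introT ssrnat.leP lm) x (fun n => 2 * IZR (cf_q beta (eta m)) * INR n ^ 2).
exists alpha; split=> //; exists m; split; first lia.
by exists n; split; [apply/ssrnat.leP | split].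
Qed.
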